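(* Let $r\ge 2$ and $s_r\ge\cdots\ge s_1\ge 2$ be integers, $\alpha$ a real number with $0\le \alpha<1/s_1$, $s:=s_1+\cdots+s_r$, and $\mathbb{K}:=K^r_{s_1,\ldots,s_r}$. There is $n_0$ such that for all $n\ge n_0$ the following holds. If $\mathcal{H}$ is an $m$ by $n$ semibipartite $r$-graph on $V_1,V_2$ satisfying $$m \le \frac{(1-\alpha s_1)s_1}{(r-1)(s-s_1)}\,n \quad\text{and}\quad d_{\mathcal{H}}(v)\ge (1-\alpha)\binom{n}{r-1}\ \text{for all } v\in V_1,$$ then $\mathcal{H}$ contains $\lfloor m/s_1\rfloor$ pairwise vertex-disjoint ordered copies of $\mathbb{K}$.
   Context: An $r$-graph is a set of $r$-element subsets (edges) of a finite vertex set; $d_{\mathcal{H}}(v)$ is the number of edges containing $v$. An $m$ by $n$ semibipartite $r$-graph on $V_1,V_2$ has vertex set $V_1\cup V_2$ (disjoint), $|V_1|=m$, $|V_2|=n$, and every edge contains exactly one vertex of $V_1$. $K^r_{s_1,\ldots,s_r}$ is the complete $r$-partite $r$-graph with parts $W_1,\ldots,W_r$ of sizes $s_1,\ldots,s_r$. An ordered copy of it in a semibipartite $r$-graph on $V_1,V_2$ is a copy with $W_1\subseteq V_1$ and $W_2,\ldots,W_r\subseteq V_2$. *)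

From HB Require Import structures.
From mathcomp Require Import all_boot all_order all_algebra.
From mathcomp Require Export reals.
Set Implicit Arguments. Unset Strict Implicit. Unset Printing Implicit Defensive.

(* Vertex set V1 ∪ V2 is modelled as the disjoint sum 'I_m + 'I_n:
   inl = vertices of V1 (|V1| = m), inr = vertices of V2 (|V2| = n). *)
Definition in_V1 (m n : nat) (x : 'I_m + 'I_n) : bool :=
  if x is inl _ then true else false.

Definition semibipartite (r m n : nat) (H : {set {set 'I_m + 'I_n}}) : Prop :=
  forall e, e \in H -> #|e| = r /\ #|[set x in e | in_V1 x]| = 1.

Definition deg (T : finType) (H : {set {set T}}) (v : T) : nat :=
  #|[set e in H | v \in e]|.

Definition ordered_copy (r : nat) (s : nat -> nat) (m n : nat)
    (H : {set {set 'I_m + 'I_n}}) (W : nat -> {set 'I_m + 'I_n}) : Prop :=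
  [/\ (forall i, 1 <= i <= r -> #|W i| = s i),
      (forall x, x \in W 1 -> in_V1 x),
      (forall i, 2 <= i <= r -> forall x, x \in W i -> ~~ in_V1 x),
      (forall i j, 1 <= i <= r -> 1 <= j <= r -> i != j -> [disjoint W i & W j])
    & (forall f : nat -> 'I_m + 'I_n, (forall i, 1 <= i <= r -> f i \in W i) ->
         [set f i.+1 | i : 'I_r] \in H)].

Definition copy_vertices (r : nat) (T : finType) (W : nat -> {set T}) : {set T} :=
  \bigcup_(1 <= i < r.+1) W i.

From HB Require Import structures.
From mathcomp Require Import all_boot all_order all_algebra.
From mathcomp Require Import reals.
From mathcomp Require Import zify ring lra.
Set Implicit Arguments. Unset Strict Implicit. Unset Printing Implicit Defensive.
Import Order.TTheory GRing.Theory Num.Theory.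

(* The copies are found greedily. Write d = r - 1 and S = s_2 + ... + s_r.
   After j < m / s_1 copies, at most j s_1 vertices of V_1 and j S vertices of
   V_2 are used. Take s_1 unused vertices V of V_1. The link of each v in V
   misses at most alpha n^_d of the ordered d-tuples of distinct vertices of
   V_2, so at least (n - jS)^_d - s_1 alpha n^_d such tuples of unused vertices
   lie in the common link of V. The bound on m gives (j + 1) S d <= (1 - alpha
   s_1) n, and for d >= 2 the strict Bernoulli inequality (1 - x)^d > 1 - d x
   turns this into a positive proportion of all n^d tuples. The ordered form of
   Erdos' theorem on complete d-partite d-graphs then provides disjoint sets
   A_1, ..., A_d of size S whose box lies in the common link; truncated to
   sizes s_2, ..., s_r they form, together with V, the next copy. For d = 1 the
   common link itself has at least S vertices. *)

(** * Counting and elementary estimates *)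

Section Bernoulli.
Local Open Scope ring_scope.

Lemma bernoulli_le (R : realDomainType) (x y : R) n : 0 <= y -> y <= x ->
  x ^+ n.+1 - (x - y) ^+ n.+1 <= n.+1%:R * y * x ^+ n.
Proof.
move=> y0 yx; have z0 : 0 <= x - y by rewrite subr_ge0.
have zx : x - y <= x by rewrite gerBl.
have x0 : 0 <= x := le_trans y0 yx.
rewrite subrXX (_ : x - (x - y) = y); last by ring.
rewrite [in X in _ <= X]mulrAC mulrC; apply: (ler_wpM2r y0).
rewrite mulr_natl -[in X in _ <= X](card_ord n.+1) -sumr_const.
apply: ler_sum => i _; rewrite -[in X in _ <= X](subnK (ltnSE (ltn_ord i))) exprD.
by rewrite ler_wpM2l ?exprn_ge0 // lerXn2r ?nnegrE.
Qed.

Lemma bernoulli_lt (R : realDomainType) (x : R) k : 0 < x -> x <= 1 ->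
  1 - k.+2%:R * x < (1 - x) ^+ k.+2.
Proof.
move=> x0 x1; have h := bernoulli_le k (ltW x0) x1; rewrite !expr1n mulr1 in h.
have h' : 1 - k.+1%:R * x <= (1 - x) ^+ k.+1 by lra.
have := ler_wpM2l (_ : 0 <= 1 - x) h'; rewrite -exprS subr_ge0 => /(_ x1).
have : 0 < k.+1%:R * x * x by rewrite !mulr_gt0.
rewrite -[k.+2]addn1 natrD.
have -> : (1 - x) * (1 - k.+1%:R * x) = 1 - (k.+1%:R + 1) * x + k.+1%:R * x * x by ring.
lra.
Qed.

End Bernoulli.

(* Multiplied by N, which avoids the exponent d.-1. *)
Lemma bernoulli_leq N t d : t <= N -> N ^ d * N <= (N - t) ^ d * N + d * t * N ^ d.
Proof.
move=> tN; case: d => [|d]; first by rewrite !expn0 mul0n addn0.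
rewrite -(ler_nat int) natrD !natrM !natrX natrB //.
have tN' : (t%:R <= N%:R :> int)%R by rewrite ler_nat.
have := ler_wpM2r (ler0n _ N) (bernoulli_le d (ler0n _ t) tN').
rewrite !exprS; lra.
Qed.

Lemma card_all_tuples (T : finType) n (A : pred T) :
  #|[set t : n.-tuple T | all A t]| = #|A| ^ n.
Proof.
elim: n => [|n IHn]; first by rewrite (@eq_card1 _ [tuple]) // => t; rewrite [t]tuple0 inE.
rewrite -sum1dep_card (partition_big (@thead _ _) A) /= => [|t]; last first.
  by case/tupleP: t => x t; case/andP.
rewrite expnS -sum_nat_const; apply: eq_bigr => x Ax.
rewrite -IHn -sum1dep_card (reindex (fun t : n.-tuple T => [tuple of x :: t])) /=.
  by apply: eq_bigl => t; rewrite Ax theadE eqxx andbT.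
exists (fun t : n.+1.-tuple T => [tuple of behead t]) => [t _ | t /andP[_ /eqP <-]].
  exact: val_inj.
by rewrite -tuple_eta.
Qed.

Lemma card_tuples_cons (T : finType) n (P : pred (n.+1.-tuple T)) :
  #|[set w | P w]| = \sum_(g : n.-tuple T) #|[set x | P [tuple of x :: g]]|.
Proof.
rewrite -sum1dep_card (partition_big (fun w : n.+1.-tuple T => [tuple of behead w]) predT) //=.
apply: eq_bigr => g _; rewrite -sum1dep_card (reindex (fun x : T => [tuple of x :: g])) /=.
  apply: eq_bigl => x; have -> : [tuple of behead [tuple of x :: g]] = g by apply: val_inj.
  by rewrite eqxx andbT.
exists (@thead _ _) => [x _ | w /andP[_ /eqP <-]]; first by rewrite theadE.
by rewrite -tuple_eta.
Qed.

Lemma card_tuples1 (T : finType) (P : pred (1.-tuple T)) :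
  #|[set w | P w]| = #|[set x | P [tuple x]]|.
Proof.
rewrite card_tuples_cons (big_pred1 [tuple]) => [|g]; last by rewrite [g]tuple0 !inE eqxx.
by apply: eq_card => x; rewrite !inE; congr (P _); apply: val_inj.
Qed.

Lemma expn_sub_leq_ffact a k : (a - k) ^ k <= a ^_ k.
Proof.
elim: k a => [|k IHk] a //; rewrite ffactnS expnS leq_mul ?leq_subr //.
by rewrite (leq_trans _ (IHk a.-1)) // -subn1 -subnDA add1n.
Qed.

Lemma ffact_leq_expn n k : n ^_ k <= n ^ k.
Proof. by elim: k => [|k IHk] //; rewrite ffactnSr expnSr leq_mul ?leq_subr. Qed.

Lemma many_heavy_terms (I : finType) (f : I -> nat) N c :
  0 < N -> (forall i, f i <= N) -> #|I| * N <= c * \sum_i f i ->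
  #|I| <= 2 * c * #|[set i | N <= 2 * c * f i]|.
Proof.
move=> N0 fN hsum; set G := [set i | _].
have heavy : \sum_(i in G) f i <= #|G| * N.
  by rewrite -sum_nat_const leq_sum.
have light : 2 * c * \sum_(i in ~: G) f i <= #|I| * N.
  rewrite big_distrr /=; apply: (@leq_trans (\sum_(i in ~: G) N)).
    by apply: leq_sum => i; rewrite !inE -ltnNge => /ltnW.
  by rewrite sum_nat_const leq_mul2r max_card orbT.
have sumID : \sum_i f i = \sum_(i in G) f i + \sum_(i in ~: G) f i.
  by rewrite (bigID (mem G)) /=; congr (_ + _); apply: eq_bigl => i; rewrite !inE.
move: hsum; rewrite sumID; nia.
Qed.

Lemma exists_ge_mean (I : finType) (P : pred I) (f : I -> nat) a :
  0 < a -> 0 < #|I| -> #|I| * a <= \sum_(i | P i) f i -> exists2 i, P i & a <= f i.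
Proof.
move=> a0 I0 hsum; have [i /andP[Pi fi] | small] := pickP [pred i | P i && (a <= f i)].
  by exists i.
suff : \sum_(i | P i) f i <= #|I| * a.-1 by nia.
apply: (@leq_trans (\sum_(i | P i) a.-1)).
  apply: leq_sum => i Pi; have := small i; rewrite /= Pi /= => /negbT.
  by rewrite -ltnNge; lia.
by rewrite (sum_nat_const P) leq_mul2r max_card orbT.
Qed.

Lemma card_bigcup_le (I T : finType) (P : pred I) (F : I -> {set T}) :
  #|\bigcup_(i | P i) F i| <= \sum_(i | P i) #|F i|.
Proof.
elim/big_rec2: _ => [|i B k _ IH]; first by rewrite cards0.
by rewrite (leq_trans (leq_card_setU _ _)) // leq_add2l.
Qed.

Definition trunc_set (T : finType) (k : nat) (A : {set T}) : {set T} :=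
  [set x in take k (enum A)].

Lemma trunc_set_sub (T : finType) k (A : {set T}) : trunc_set k A \subset A.
Proof. by apply/subsetP => x; rewrite inE => /mem_take; rewrite mem_enum. Qed.

Lemma card_trunc_set (T : finType) k (A : {set T}) : k <= #|A| -> #|trunc_set k A| = k.
Proof.
by move=> kA; rewrite cardsE (card_uniqP (take_uniq _ (enum_uniq _))) size_takel // -cardE.
Qed.

(** * Boxes in dense sets of tuples *)

Lemma expn_leq_scaled_ffact N D c t :
  2 * N <= 4 * c * D -> 4 * c * t <= N -> N ^ t <= (4 * c) ^ t * D ^_ t.
Proof.
move=> ND tN; case: t tN => [//|t] tN.
rewrite (leq_trans _ (leq_mul (leqnn _) (expn_sub_leq_ffact D t.+1))) //.
by rewrite -expnMn leq_exp2r //; nia.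
Qed.

Lemma box_all (T : finType) d (A : nat -> {set T}) (p : pred T) :
  (forall i, i < d -> 0 < #|A i|) ->
  (forall w : d.-tuple T, (forall i : 'I_d, tnth w i \in A i) -> all p w) ->
  forall j a, j < d -> a \in A j -> p a.
Proof.
move=> A0 box j a jd aA.
pose w := [tuple if i == Ordinal jd then a else odflt a [pick x in A i] | i < d].
have wA (i : 'I_d) : tnth w i \in A i.
  rewrite tnth_mktuple; case: eqP => [-> //|_].
  by case: pickP => [x // | A_0]; move: (A0 i (ltn_ord i)); rewrite (eq_card0 A_0).
have /allP := box w wA; apply.
by rewrite (_ : a = tnth w (Ordinal jd)) ?mem_tnth // tnth_mktuple eqxx.
Qed.

(* A suffix g with at least N / 2c extensions x :: g in P has at least
   (N / 4c)^t tuples tau of distinct extensions; averaging over tau gives the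
   constant. *)
Lemma exists_dense_link (T : finType) d t c (P : pred (d.+1.-tuple T)) :
  0 < #|T| -> 4 * c * t <= #|T| -> #|T| ^ d.+1 <= c * #|[set w | P w]| ->
  exists2 tau : t.-tuple T, uniq tau &
    #|T| ^ d <= 2 * c * (4 * c) ^ t *
                #|[set g : d.-tuple T | all (fun x => P [tuple of x :: g]) tau]|.
Proof.
set N := #|T| => N0 tN hP.
pose nbr (g : d.-tuple T) x := P [tuple of x :: g].
pose links (tau : t.-tuple T) := [set g : d.-tuple T | all (nbr g) tau].
pose stars (g : d.-tuple T) := [set tau : t.-tuple T | all (nbr g) tau & uniq tau].
have heavy : N ^ d <= 2 * c * #|[set g | N <= 2 * c * #|nbr g|]|.
  rewrite -card_tuple; apply: many_heavy_terms N0 (fun g => max_card _) _.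
  rewrite card_tuple -expnSr (leq_trans hP) // leq_mul2l card_tuples_cons.
  by apply/orP; right; apply/eq_leq/eq_bigr => g _; apply: eq_card => x; rewrite inE.
have star_lb g : N <= 2 * c * #|nbr g| -> N ^ t <= (4 * c) ^ t * #|stars g|.
  move=> hg; rewrite card_uniq_tuples expn_leq_scaled_ffact //.
  by rewrite (_ : 4 * c * _ = 2 * (2 * c * #|nbr g|)) ?leq_mul2l ?hg // !mulnA.
have double : \sum_g #|stars g| = \sum_(tau : t.-tuple T | uniq tau) #|links tau|.
  rewrite (eq_bigr (fun g => \sum_(tau : t.-tuple T | all (nbr g) tau && uniq tau) 1)) => [|g _].
    rewrite (exchange_big_dep (fun tau : t.-tuple T => uniq tau)) /= => [|g tau _ /andP[] //].
    apply: eq_bigr => tau utau; rewrite sum1dep_card.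
    by apply: eq_card => g; rewrite !inE utau andbT.
  by rewrite sum1dep_card.
apply: exists_ge_mean; rewrite ?card_tuple ?expn_gt0 ?N0 //.
rewrite -big_distrr /= -double mulnC -mulnA.
rewrite -/N (leq_trans (leq_mul heavy (leqnn _))) // -mulnA leq_mul2l; apply/orP; right.
rewrite -sum1dep_card big_distrl big_distrr /=.
rewrite [X in _ <= X](bigID (fun g => N <= 2 * c * #|nbr g|)) /=.
rewrite (leq_trans _ (leq_addr _ _)) // leq_sum // => g hg.
by rewrite mul1n star_lb.
Qed.

Lemma dense_avoiding (T : finType) d t K (tau : t.-tuple T) (L : pred (d.-tuple T)) :
  uniq tau -> 0 < #|T| -> 2 * K * d * t <= #|T| -> #|T| ^ d <= K * #|[set g | L g]| ->
  #|T| ^ d <= 2 * K * #|[set g | L g && all [predC tau] g]|.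
Proof.
set N := #|T| => utau N0 dtN hL; set Q := [set g | _].
have ctau : #|tau| = t by rewrite (card_uniqP utau) size_tuple.
have tN : t <= N by rewrite -ctau max_card.
have cAv : #|[set g : d.-tuple T | all [predC tau] g]| = (N - t) ^ d.
  by rewrite card_all_tuples -[N](cardC (mem tau)) ctau addKn.
have LAv : #|[set g | L g]| + (N - t) ^ d <= #|Q| + N ^ d.
  rewrite -cAv -cardsUI addnC leq_add ?subset_leq_card //; last by rewrite -card_tuple max_card.
  by apply/subsetP => g; rewrite !inE.
have bern := bernoulli_leq d tN.
set X := N ^ d in hL LAv bern *; set Y := (N - t) ^ d in LAv bern.
set Lc := #|[set g | L g]| in hL LAv; set Qc := #|Q| in LAv *.
have h1 : N * Lc <= N * Qc + d * t * X by nia.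
have h2 : N * X <= K * (N * Qc) + K * (d * t * X) by nia.
have h3 : 2 * (K * (d * t * X)) <= N * X.
  by rewrite mulnA mulnA leq_mul2r; apply/orP; right; lia.
rewrite -(@leq_pmul2l N) 1?mulnCA; lia.
Qed.

(* Ordered form of Erdos' theorem that dense d-graphs contain K^(d)(t,...,t). *)
Theorem erdos_box d t c : 0 < t -> exists N0, forall (T : finType) (P : pred (d.-tuple T)),
  N0 <= #|T| -> #|T| ^ d <= c * #|[set w | P w]| ->
  exists A : nat -> {set T},
    [/\ forall i, i < d -> #|A i| = t,
        forall i j, i < d -> j < d -> i != j -> [disjoint A i & A j]
      & forall w : d.-tuple T, (forall i : 'I_d, tnth w i \in A i) -> P w].
Proof.
move=> t0; elim: d c => [|d IHd] c.
  exists 0 => T P _; rewrite expn0 => hP; exists (fun=> set0); split=> // w _.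
  have /card_gt0P[w0] : 0 < #|[set w | P w]| by case: #|_| hP; rewrite ?muln0.
  by rewrite inE [w]tuple0 [w0]tuple0.
(* Fix a t-tuple tau of distinct first coordinates with a dense common link,
   and recurse into that link restricted to tuples avoiding tau. *)
pose K := 2 * c * (4 * c) ^ t; have [N1 HN1] := IHd (2 * K).
exists (N1 + 4 * c * t + 2 * K * d * t + 1) => T P HN HP.
have N0 : 0 < #|T| by lia.
have ctN : 4 * c * t <= #|T| by lia.
have dtN : 2 * K * d * t <= #|T| by lia.
have N1T : N1 <= #|T| by lia.
have [tau utau Htau] := exists_dense_link N0 ctN HP.
have [A [HA1 HA2 HA3]] := HN1 T _ N1T (dense_avoiding utau N0 dtN Htau).
have Aavoid j : j < d -> [disjoint A j & [set x in tau]].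
  move=> jd; rewrite disjoint_subset; apply/subsetP => a aA; rewrite !inE.
  by apply: (box_all (p := [predC tau])) jd aA => [i /HA1 ->|w /HA3 /andP[]].
exists (fun i => if i is i'.+1 then A i' else [set x in tau]); split.
- by case=> [_|i /HA1] //=; rewrite cardsE (card_uniqP utau) size_tuple.
- case=> [|i] [|j] //= hi hj hij; last exact: HA2.
    by rewrite disjoint_sym Aavoid.
  exact: Aavoid.
- case/tupleP=> x g Hw.
  have gA (i : 'I_d) : tnth g i \in A i by have := Hw (lift ord0 i); rewrite tnthS.
  have /andP[/allP xtau _] := HA3 g gA.
  by apply: xtau; have := Hw ord0; rewrite tnth0 inE.
Qed.

(** * Falling factorials *)

Section Density.
Local Open Scope ring_scope.

Lemma lerB_natr (R : numDomainType) (m n : nat) : m%:R - n%:R <= (m - n)%:R :> R.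
Proof.
have [nm | mn] := leqP n m; first by rewrite natrB.
by rewrite (eqP (ltnW mn : (m - n == 0)%N)) subr_le0 ler_nat ltnW.
Qed.

Lemma ffact_sub_ge (R : realFieldType) (b : R) (n u k : nat) :
  0 <= b <= 1 -> u%:R <= (1 - b) * n%:R -> k.+1%:R <= b * n%:R ->
  b ^+ k.+1 * n%:R ^+ k.+1 - k.+1%:R ^+ 2 * n%:R ^+ k <= ((n - u) ^_ k.+1)%:R.
Proof.
case/andP=> b0 b1 un kn; set d := k.+1 in kn *.
have n0 : 0 <= n%:R :> R := ler0n _ _.
have tail : (b * n%:R - d%:R) ^+ d <= ((n - u) ^_ d)%:R.
  apply: (@le_trans _ _ ((n - u - d) ^ d)%N%:R); last by rewrite ler_nat expn_sub_leq_ffact.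
  rewrite natrX lerXn2r ?nnegrE ?subr_ge0 ?ler0n //.
  apply: le_trans (lerB_natr _ _ _); rewrite lerD2r (le_trans _ (lerB_natr _ _ _)) //; lra.
have step := bernoulli_le k (ler0n _ d) kn.
have bn : (b * n%:R) ^+ k <= n%:R ^+ k.
  by rewrite exprMn -[X in _ <= X]mul1r ler_wpM2r ?exprn_ge0 ?exprn_ile1.
have := ler_wpM2l (mulr_ge0 (ler0n R d) (ler0n R d)) bn.
move: step; rewrite -/d [(b * n%:R) ^+ d]exprMn expr2; lra.
Qed.

(* With x := (1 - a) / d we have u <= x n, so (n - u)^_d is about ((1 - x) n)^d,
   and (1 - x)^d > 1 - d x = a strictly because d >= 2. *)
Lemma ffact_density (R : archiRealFieldType) (a : R) d : (2 <= d)%N -> 0 <= a -> a < 1 ->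
  exists c n1 : nat, forall n u : nat, (n1 <= n)%N -> u%:R * d%:R <= (1 - a) * n%:R ->
    n%:R ^+ d <= c%:R * (((n - u) ^_ d)%:R - a * (n ^_ d)%:R).
Proof.
case: d => [|[|k]] // _ a0 a1; set d := k.+2.
have d0 : 0 < d%:R :> R by rewrite ltr0n.
have d2 : 2 <= d%:R :> R by rewrite ler_nat.
have [x xd] : {x : R | x * d%:R = 1 - a} by exists ((1 - a) / d%:R); rewrite mulfVK ?gt_eqF.
have x0 : 0 < x by rewrite -(pmulr_lgt0 _ d0) xd subr_gt0.
have xh : x <= 1 / 2 by have := ler_wpM2l (ltW x0) d2; lra.
pose g := (1 - x) ^+ d - a.
have g0 : 0 < g.
  have x1 : x <= 1 by lra.
  by have := bernoulli_lt k x0 x1; rewrite -/d mulrC xd /g; lra.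
have [c cg] : {c : nat | 2 / g < c%:R}.
  by exists (Num.bound (2 / g)); rewrite archi_boundP ?divr_ge0 ?ltW.
pose n1 := Num.bound (2 * d%:R ^+ 2 / g + 2 * d%:R).
exists c, n1 => n u n1n ud.
have nbig : 2 * d%:R ^+ 2 / g + 2 * d%:R < n%:R.
  rewrite (lt_le_trans (archi_boundP _)) ?ler_nat //.
  by rewrite addr_ge0 ?mulr_ge0 ?exprn_ge0 ?ler0n ?ltW ?invr_gt0.
have n0 : 0 <= n%:R :> R := ler0n _ _.
have gd : d%:R ^+ 2 <= g / 2 * n%:R.
  have : 2 * d%:R ^+ 2 / g <= n%:R by rewrite -(lerD2r (2 * d%:R)); lra.
  by rewrite ler_pdivrMr // mulrC; lra.
have lb : (1 - x) ^+ d * n%:R ^+ d - d%:R ^+ 2 * n%:R ^+ k.+1 <= ((n - u) ^_ d)%:R.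
  apply: ffact_sub_ge; first by apply/andP; split; lra.
    by rewrite subKr -(ler_pM2r d0) mulrAC xd.
  have hx : 1 / 2 <= 1 - x by lra.
  have := ler_wpM2r n0 hx; have : 0 <= 2 * d%:R ^+ 2 / g.
    by rewrite divr_ge0 ?(ltW g0) ?mulr_ge0 ?exprn_ge0.
  rewrite -/d; lra.
have tail : d%:R ^+ 2 * n%:R ^+ k.+1 <= g / 2 * n%:R ^+ d.
  by rewrite [n%:R ^+ d]exprS mulrA; apply: ler_wpM2r; rewrite ?exprn_ge0.
have ffn : a * (n ^_ d)%:R <= a * n%:R ^+ d.
  by rewrite ler_wpM2l // -natrX ler_nat ffact_leq_expn.
have key : g / 2 * n%:R ^+ d <= ((n - u) ^_ d)%:R - a * (n ^_ d)%:R.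
  have e : g / 2 * n%:R ^+ d = ((1 - x) ^+ d * n%:R ^+ d - a * n%:R ^+ d) / 2.
    by rewrite /g; ring.
  rewrite e in tail *; lra.
have cg1 : 1 <= c%:R * (g / 2).
  by rewrite mulrA ler_pdivlMr // mul1r ltW // -ltr_pdivrMr.
apply: le_trans (ler_wpM2l (ler0n _ c) key).
by rewrite mulrA -[X in X <= _]mul1r ler_wpM2r ?exprn_ge0.
Qed.

End Density.

(** * Links in semibipartite hypergraphs *)

Definition star_edge m n (v : 'I_m) (w : seq 'I_n) : {set 'I_m + 'I_n} :=
  inl v |: inr @: [set x in w].

Lemma inl_notin_imset_inr (T1 T2 : finType) (x : T1) (B : {set T2}) :
  inl x \notin (inr @: B : {set T1 + T2}).
Proof. by apply/imsetP => -[]. Qed.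

Lemma semibipartite_edgeE r m n (H : {set {set 'I_m + 'I_n}}) (v : 'I_m) e :
  semibipartite r.+1 H -> e \in H -> inl v \in e ->
  e = star_edge v (enum (inr @^-1: e)) /\ #|inr @^-1: e| = r.
Proof.
move=> sb eH ve; have [ce /eqP/cards1P[x ex]] := sb e eH.
have V1e w : inl w \in e -> w = v.
  have V1 z : inl z \in e -> inl z = x by move=> ze; apply/set1P; rewrite -ex inE ze.
  by move=> /V1 wx; move: (V1 v ve); rewrite -wx => -[].
have eE : e = star_edge v (enum (inr @^-1: e)).
  apply/setP => -[w|y]; rewrite /star_edge !inE.
    rewrite (negbTE (inl_notin_imset_inr _ _)) orbF.
    by apply/idP/eqP => [/V1e -> // | [->]].
  by rewrite mem_imset ?inE ?mem_enum ?inE //; move=> ? ? [].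
split=> //; move: ce; rewrite {1}eE cardsU1 inl_notin_imset_inr card_imset; last by move=> ? ? [].
by rewrite set_enum => -[].
Qed.

Lemma card_link_tuples r m n (H : {set {set 'I_m + 'I_n}}) (v : 'I_m) :
  semibipartite r.+1 H ->
  #|[set w : r.-tuple 'I_n | uniq w && (star_edge v w \in H)]| = r`! * deg H (inl v).
Proof.
move=> sb; rewrite -sum1dep_card (partition_big (fun w : r.-tuple _ => star_edge v w)
  (fun e => (e \in H) && (inl v \in e))) /= => [|w /andP[_ ->]]; last by rewrite !inE eqxx.
rewrite /deg mulnC -sum1dep_card big_distrl /=; apply: eq_bigr => e /andP[eH ve].
have [eE ce] := semibipartite_edgeE sb eH ve.
rewrite mul1n sum1dep_card.
transitivity #|[set w : r.-tuple 'I_n | all (mem (inr @^-1: e)) w & uniq w]|.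
  apply: eq_card => w; rewrite !inE.
  apply/andP/andP => [[/andP[uw _] /eqP <-] | [aw uw]].
    by split=> //; apply/allP => x xw; rewrite !inE mem_imset ?inE //; move=> ? ? [].
  have we : [set x in w] = inr @^-1: e.
    apply/setP/subset_cardP; first by rewrite cardsE (card_uniqP uw) size_tuple ce.
    by apply/subsetP => x; rewrite inE => /(allP aw).
  have -> : star_edge v w = e by rewrite [RHS]eE /star_edge set_enum we.
  by rewrite uw eH eqxx.
by rewrite card_uniq_tuples ce ffactnn.
Qed.

Definition common_link d m n (H : {set {set 'I_m + 'I_n}}) (V : {set 'I_m}) (U : {set 'I_n})
    (w : d.-tuple 'I_n) : bool :=
  [&& uniq w, all [predC U] w & [forall v in V, star_edge v w \in H]].

Section LinkCounting.
Local Open Scope ring_scope.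
Variables (R : realFieldType) (d m n : nat) (H : {set {set 'I_m + 'I_n}}) (alpha : R).
Hypothesis sbH : semibipartite d.+1 H.

Lemma card_nonlink_tuples (v : 'I_m) :
  (1 - alpha) * ('C(n, d))%:R <= (deg H (inl v))%:R ->
  #|[set w : d.-tuple 'I_n | uniq w && (star_edge v w \notin H)]|%:R <= alpha * (n ^_ d)%:R.
Proof.
move=> degv; set NL := [set w | _].
have split_uniq : (#|[set w : d.-tuple 'I_n | uniq w]| =
    #|[set w : d.-tuple 'I_n | uniq w && (star_edge v w \in H)]| + #|NL|)%N.
  rewrite -!sum1dep_card (bigID (fun w : d.-tuple 'I_n => star_edge v w \in H)) /=.
  by congr (_ + _)%N; apply: eq_bigl => w; rewrite andbC.
have := card_uniq_tuples d (predT : pred 'I_n); rewrite card_ord.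
rewrite (eq_card (B := [set w : d.-tuple 'I_n | uniq w])) => [|w]; last by rewrite !inE all_predT.
rewrite split_uniq card_link_tuples // => e.
have -> : #|NL|%:R = (n ^_ d)%:R - (d`! * deg H (inl v))%:R :> R.
  by rewrite -e natrD addrAC subrr add0r.
rewrite -bin_ffact !natrM.
have := ler_wpM2l (ler0n R d`!) degv.
have -> : d`!%:R * ((1 - alpha) * 'C(n, d)%:R) =
  'C(n, d)%:R * d`!%:R - alpha * ('C(n, d)%:R * d`!%:R) :> R by ring.
lra.
Qed.

Lemma card_common_link_ge (V : {set 'I_m}) (U : {set 'I_n}) :
  (forall v, v \in V -> (1 - alpha) * ('C(n, d))%:R <= (deg H (inl v))%:R) ->
  ((n - #|U|) ^_ d)%:R - #|V|%:R * alpha * (n ^_ d)%:R <=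
  #|[set w : d.-tuple _ | common_link H V U w]|%:R.
Proof.
move=> degV.
pose NL v := [set w : d.-tuple 'I_n | uniq w && (star_edge v w \notin H)].
pose Av := [set w : d.-tuple 'I_n | all [predC U] w & uniq w].
have cAv : #|Av| = ((n - #|U|) ^_ d)%N.
  rewrite card_uniq_tuples; have -> : #|[predC U]| = #|~: U| by apply: eq_card => x; rewrite !inE.
  by rewrite (cardsCs (~: U)) setCK card_ord.
have AvCL : Av \subset [set w : d.-tuple _ | common_link H V U w] :|: \bigcup_(v in V) NL v.
  apply/subsetP => w; rewrite !inE /common_link => /andP[aw uw]; rewrite aw uw /=.
  have [v /andP[vV vw] | allV] := pickP [pred v | (v \in V) && (star_edge v w \notin H)].
    by apply/orP; right; apply/bigcupP; exists v; rewrite // inE uw.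
  apply/orP; left; apply/forall_inP => v vV.
  by have := allV v; rewrite /= vV /= => /negbFE.
have := leq_trans (subset_leq_card AvCL) (leq_card_setU _ _).
move/leq_trans/(_ (leq_add (leqnn _) (card_bigcup_le _ _))).
rewrite cAv -(ler_nat R) natrD natr_sum.
have : \sum_(v in V) (#|NL v|%:R : R) <= #|V|%:R * alpha * (n ^_ d)%:R.
  rewrite (le_trans (ler_sum _ (fun v vV => card_nonlink_tuples (degV v vV)))) //.
  by rewrite sumr_const -mulrA mulr_natl.
lra.
Qed.
End LinkCounting.

Section CommonLinkBox.
Local Open Scope ring_scope.

Lemma common_link_box (R : archiRealFieldType) (alpha : R) d t k :
  (0 < d)%N -> (0 < t)%N -> 0 <= alpha -> alpha * k%:R < 1 ->
  exists n0, forall n, (n0 <= n)%N ->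
  forall m (H : {set {set 'I_m + 'I_n}}) (V : {set 'I_m}) (U : {set 'I_n}),
    semibipartite d.+1 H ->
    (forall v, v \in V -> (1 - alpha) * ('C(n, d))%:R <= (deg H (inl v))%:R) ->
    #|V| = k -> (#|U| + t)%:R * d%:R <= (1 - alpha * k%:R) * n%:R ->
    exists A : nat -> {set 'I_n},
      [/\ forall i, (i < d)%N -> #|A i| = t,
          forall i j, (i < d)%N -> (j < d)%N -> i != j -> [disjoint A i & A j]
        & forall w : d.-tuple 'I_n, (forall i : 'I_d, tnth w i \in A i) -> common_link H V U w].
Proof.
move=> d0 t0 a0 ak; have [d2 | d1] := leqP 2 d.
  have [c [n1 dens]] := ffact_density d2 (mulr_ge0 a0 (ler0n _ k)) ak.
  have [N0 box] := erdos_box d c t0.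
  exists (n1 + N0)%N => n nbig m H V U sb degV cV hU.
  apply: box; first by rewrite card_ord; lia.
  rewrite card_ord -(ler_nat R) natrM natrX (le_trans (dens n #|U| _ _)) //; first lia.
    by apply: le_trans hU; rewrite ler_wpM2r ?ler0n // ler_nat leq_addr.
  by rewrite ler_wpM2l // (le_trans _ (card_common_link_ge sb U degV)) // cV (mulrC k%:R).
(* For d = 1 there is no density gap; the slack t bounds the common link. *)
case: d d0 d1 => [|[|//]] // _ _; exists 0%N => n _ m H V U sb degV cV hU.
have := card_common_link_ge sb U degV; rewrite cV !ffactn1 card_tuples1.
set S := [set x | _] => cS.
have tS : (t <= #|S|)%N.
  rewrite -(ler_nat R) (le_trans _ cS) //; have := lerB_natr R n #|U|.
  by move: hU; rewrite mulr1 natrD; lra.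
exists (fun=> trunc_set t S); split=> [i _|i j|w wB]; first exact: card_trunc_set.
  by rewrite !ltnS !leqn0 => /eqP-> /eqP->.
have := subsetP (trunc_set_sub t S) _ (wB ord0); rewrite inE; congr common_link.
by case/tupleP: w {wB} => x g; rewrite [g]tuple0; apply: val_inj.
Qed.

End CommonLinkBox.

(** * Assembling disjoint copies *)

Section SumSets.
Variables (T1 T2 : finType) (A : {set T1}) (B : {set T2}).

Lemma preimset_inl_setU : inl @^-1: (inl @: A :|: inr @: B) = A.
Proof.
apply/setP => x; rewrite !inE mem_imset; last by move=> ? ? [].
by case: imsetP => [[? _] //|]; rewrite orbF.
Qed.

Lemma preimset_inr_setU : inr @^-1: (inl @: A :|: inr @: B) = B.
Proof.
apply/setP => y; rewrite !inE mem_imset; last by move=> ? ? [].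
by case: imsetP => [[? _] //|].
Qed.
End SumSets.

(* Index 0 is ignored by [ordered_copy] and [copy_vertices]. *)
Definition copy_parts m n (V : {set 'I_m}) (B : nat -> {set 'I_n}) (i : nat) : {set 'I_m + 'I_n} :=
  if i is j.+2 then inr @: B j else inl @: V.

Section CopyParts.
Variables (m n d : nat) (V : {set 'I_m}) (B : nat -> {set 'I_n}).

Lemma copy_parts_vertices :
  copy_vertices d.+1 (copy_parts V B) = inl @: V :|: inr @: \bigcup_(i < d) B i.
Proof.
rewrite /copy_vertices big_ltn // !big_add1 /= big_mkord; congr (_ :|: _).
by rewrite (big_morph (fun A : {set 'I_n} => inr @: A) (imsetU inr) (imset0 inr)).
Qed.

Lemma preimset_inl_copy_parts : inl @^-1: copy_vertices d.+1 (copy_parts V B) = V.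
Proof. by rewrite copy_parts_vertices preimset_inl_setU. Qed.

Lemma preimset_inr_copy_parts :
  inr @^-1: copy_vertices d.+1 (copy_parts V B) = \bigcup_(i < d) B i.
Proof. by rewrite copy_parts_vertices preimset_inr_setU. Qed.

Lemma ordered_copy_parts (s : nat -> nat) (H : {set {set 'I_m + 'I_n}}) :
  #|V| = s 1 -> (forall i, i < d -> #|B i| = s i.+2) ->
  (forall i j, i < d -> j < d -> i != j -> [disjoint B i & B j]) ->
  (forall w : d.-tuple 'I_n, (forall i : 'I_d, tnth w i \in B i) ->
     forall v, v \in V -> star_edge v w \in H) ->
  ordered_copy d.+1 s H (copy_parts V B).
Proof.
move=> cV cB disB box; have inl_inj : injective (@inl 'I_m 'I_n) by move=> ? ? [].
have inr_inj : injective (@inr 'I_m 'I_n) by move=> ? ? [].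
split.
- by case=> [|[|i]] // /andP[_ hi]; rewrite /= card_imset // ?cB.
- by move=> x /imsetP[y _ ->].
- by case=> [|[|i]] // _ x /imsetP[y _ ->].
- case=> [|[|i]] [|[|j]] // /andP[_ hi] /andP[_ hj] ij; apply/pred0P => x /=.
  + by apply/andP => -[/imsetP[a _ ->] /imsetP[]].
  + by apply/andP => -[/imsetP[a _ ->] /imsetP[]].
  + apply/andP => -[/imsetP[a aB ->] /imsetP[b bB [ab]]].
    by rewrite ab in aB; rewrite (disjointFr (disB i j hi hj ij) aB) in bB.
move=> f hf; have /imsetP[v vV fv] := hf 1 isT.
have : forall i : 'I_d, exists2 y, y \in B i & f i.+2 = inr y.
  by move=> i; have /imsetP[y yB ->] := hf i.+2 (ltn_ord i); exists y.
case/fin_all_exists2 => g gB fg.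
suff -> : [set f i.+1 | i : 'I_d.+1] = star_edge v [tuple g i | i < d].
  by apply: box vV => i; rewrite tnth_mktuple.
apply/setP => x; apply/imsetP/idP => [[[[|i] hi] _ ->] | ].
  by rewrite /= fv !inE eqxx.
  by rewrite /= (fg (Ordinal (hi : i < d))) !inE mem_imset ?inE ?map_f ?mem_enum ?orbT.
rewrite !inE => /orP[/eqP -> | /imsetP[y]]; first by exists ord0.
rewrite inE => /tnthP[i ->] ->; exists (lift ord0 i) => //=.
by rewrite fg tnth_mktuple.
Qed.
End CopyParts.

Lemma copy_in_box d m n (s : nat -> nat) (H : {set {set 'I_m + 'I_n}})
    (V : {set 'I_m}) (A : nat -> {set 'I_n}) :
  #|V| = s 1 -> (forall i, i < d -> s i.+2 <= #|A i|) ->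
  (forall i j, i < d -> j < d -> i != j -> [disjoint A i & A j]) ->
  (forall w : d.-tuple 'I_n, (forall i : 'I_d, tnth w i \in A i) ->
     forall v, v \in V -> star_edge v w \in H) ->
  exists W, [/\ ordered_copy d.+1 s H W, inl @^-1: copy_vertices d.+1 W = V,
               inr @^-1: copy_vertices d.+1 W \subset \bigcup_(i < d) A i
             & #|inr @^-1: copy_vertices d.+1 W| <= \sum_(i < d) s i.+2].
Proof.
move=> cV cA disA boxA; pose B i := trunc_set (s i.+2) (A i).
have cB i : i < d -> #|B i| = s i.+2 by move=> id; rewrite card_trunc_set ?cA.
exists (copy_parts V B); rewrite preimset_inl_copy_parts preimset_inr_copy_parts; split=> //.
- apply: ordered_copy_parts cV cB _ _ => [i j id jd ij | w wB].
    exact: disjointW (trunc_set_sub _ _) (trunc_set_sub _ _) (disA i j id jd ij).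
  by apply: boxA => i; apply: subsetP (trunc_set_sub _ _) _ (wB i).
- by apply/bigcupsP => i _; rewrite (subset_trans (trunc_set_sub _ _)) // (bigcup_sup i).
rewrite (leq_trans (card_bigcup_le _ _)) // leq_sum // => i _.
by rewrite cB.
Qed.

Lemma copy_in_common_link_box d m n (s : nat -> nat) (H : {set {set 'I_m + 'I_n}})
    (V : {set 'I_m}) (U : {set 'I_n}) (A : nat -> {set 'I_n}) t :
  #|V| = s 1 -> 0 < t -> (forall i, i < d -> #|A i| = t /\ s i.+2 <= t) ->
  (forall i j, i < d -> j < d -> i != j -> [disjoint A i & A j]) ->
  (forall w : d.-tuple 'I_n, (forall i : 'I_d, tnth w i \in A i) -> common_link H V U w) ->
  exists W, [/\ ordered_copy d.+1 s H W, inl @^-1: copy_vertices d.+1 W = V,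
               [disjoint inr @^-1: copy_vertices d.+1 W & U]
             & #|inr @^-1: copy_vertices d.+1 W| <= \sum_(i < d) s i.+2].
Proof.
move=> cV t0 cA disA boxA.
have boxH w : (forall i : 'I_d, tnth w i \in A i) -> forall v, v \in V -> star_edge v w \in H.
  by move=> wA v vV; have /and3P[_ _ /forall_inP] := boxA w wA; apply.
have [|W [Wc WV WA cW]] := copy_in_box cV _ disA boxH; first by move=> i /cA[->].
exists W; split=> //; apply: disjointWl WA _.
rewrite disjoint_sym; apply: bigcup_disjoint => i _; rewrite disjoint_sym disjoint_subset.
apply/subsetP => a; apply: box_all (ltn_ord i) => [l /cA[-> //] | w /boxA /and3P[] //].
Qed.

Lemma disjoint_sum_preimset (T1 T2 : finType) (X Y : {set T1 + T2}) :
  [disjoint inl @^-1: X & inl @^-1: Y] -> [disjoint inr @^-1: X & inr @^-1: Y] ->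
  [disjoint X & Y].
Proof.
rewrite -!setI_eq0 -!preimsetI => /eqP/setP l0 /eqP/setP r0.
by apply/eqP/setP => -[x|y]; [have := l0 x | have := r0 y]; rewrite !inE.
Qed.

Section GreedyCopies.
Variables (r m n k a b : nat) (s : nat -> nat) (H : {set {set 'I_m + 'I_n}}).
Local Notation lpart W := (inl @^-1: copy_vertices r W).
Local Notation rpart W := (inr @^-1: copy_vertices r W).

Hypothesis copy_avoiding : forall j (U1 : {set 'I_m}) (U2 : {set 'I_n}),
  j < k -> #|U1| <= j * a -> #|U2| <= j * b ->
  exists W, [/\ ordered_copy r s H W, [disjoint lpart W & U1], [disjoint rpart W & U2],
                #|lpart W| <= a & #|rpart W| <= b].

Lemma greedy_disjoint_copies :
  exists W : 'I_k -> nat -> {set 'I_m + 'I_n},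
    (forall j, ordered_copy r s H (W j)) /\
    (forall j j', j != j' -> [disjoint copy_vertices r (W j) & copy_vertices r (W j')]).
Proof.
have greedy j : j <= k -> exists (W : nat -> nat -> {set 'I_m + 'I_n})
    (U1 : {set 'I_m}) (U2 : {set 'I_n}),
  [/\ #|U1| <= j * a, #|U2| <= j * b,
      forall i, i < j -> ordered_copy r s H (W i),
      forall i, i < j -> lpart (W i) \subset U1 /\ rpart (W i) \subset U2
    & forall i i', i < j -> i' < j -> i != i' ->
        [disjoint copy_vertices r (W i) & copy_vertices r (W i')]].
  elim: j => [_|j IHj jk]; first by exists (fun _ _ => set0), set0, set0; rewrite !cards0.
  have [W [U1 [U2 [cU1 cU2 Wc WU Wd]]]] := IHj (ltnW jk).
  have [X [Xc XU1 XU2 cX1 cX2]] := copy_avoiding jk cU1 cU2.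
  have XW i : i < j -> [disjoint copy_vertices r X & copy_vertices r (W i)].
    move=> ij; have [W1 W2] := WU i ij.
    by apply: disjoint_sum_preimset; [apply: disjointWr XU1 | apply: disjointWr XU2].
  exists (fun i => if i == j then X else W i), (U1 :|: lpart X), (U2 :|: rpart X); split.
  - by rewrite mulSn addnC (leq_trans (leq_card_setU _ _)) ?leq_add.
  - by rewrite mulSn addnC (leq_trans (leq_card_setU _ _)) ?leq_add.
  - move=> i; rewrite ltnS leq_eqVlt => /orP[/eqP-> | ij]; first by rewrite eqxx.
    by rewrite ltn_eqF //; apply: Wc.
  - move=> i; rewrite ltnS leq_eqVlt => /orP[/eqP-> | ij]; rewrite ?eqxx ?ltn_eqF //.
      by rewrite !subsetUr.
    by have [W1 W2] := WU i ij; rewrite !(subset_trans _ (subsetUl _ _)).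
  - move=> i i'; rewrite !ltnS => ij i'j.
    have lt_j l : l <= j -> l != j -> l < j by rewrite ltn_neqAle => -> ->.
    case: (eqVneq i j) ij => [-> | ne] ij; case: (eqVneq i' j) i'j => [-> | ne'] i'j //= ii'.
    + exact: XW (lt_j _ i'j ne').
    + by rewrite disjoint_sym XW ?lt_j.
    + by apply: Wd; rewrite ?lt_j.
have [W [U1 [U2 [_ _ Wc _ Wd]]]] := greedy k (leqnn k).
by exists (fun j : 'I_k => W j); split=> [j | j j' jj']; [apply: Wc | apply: Wd].
Qed.

End GreedyCopies.

Local Open Scope ring_scope.

Lemma next_copy_fits (R : realFieldType) (x : R) d S s1 m n j u :
  (0 < d)%N -> (0 < S)%N -> (0 < s1)%N -> (j < m %/ s1)%N -> (u <= j * S)%N ->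
  m%:R <= x * s1%:R / (d%:R * S%:R) * n%:R -> (u + S)%:R * d%:R <= x * n%:R.
Proof.
move=> d0 S0 s10 jm uj hm.
have jm1 : (j.+1 * s1 <= m)%N by rewrite -leq_divRL.
have uS : ((u + S) * d * s1 <= m * (d * S))%N.
  have h1 : (u + S <= j.+1 * S)%N by rewrite mulSn addnC leq_add2l.
  have := leq_mul h1 (leqnn (d * s1)); have := leq_mul jm1 (leqnn (d * S)); nia.
rewrite mulrAC ler_pdivlMr ?mulr_gt0 ?ltr0n // in hm.
rewrite -(ler_pM2r (_ : 0 < s1%:R)) ?ltr0n // (mulrAC x) (le_trans _ hm) //.
by rewrite -!natrM ler_nat.
Qed.

Unset Implicit Arguments.

Theorem lemma5p3 (R : realType) (r : nat) (s : nat -> nat) (alpha : R) :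
  (2 <= r)%N ->
  (2 <= s 1%N)%N ->
  (forall i, (1 <= i < r)%N -> (s i <= s i.+1)%N) ->
  0 <= alpha -> alpha < 1 / (s 1%N)%:R ->
  let ssum := (\sum_(1 <= i < r.+1) s i)%N in
  exists n0 : nat, forall n : nat, (n0 <= n)%N ->
  forall (m : nat) (H : {set {set 'I_m + 'I_n}}),
    semibipartite r H ->
    m%:R <= (1 - alpha * (s 1%N)%:R) * (s 1%N)%:R
              / ((r - 1)%:R * (ssum - s 1%N)%:R) * n%:R ->
    (forall v : 'I_m, (1 - alpha) * ('C(n, r - 1))%:R <= (deg H (inl v))%:R) ->
    exists W : 'I_(m %/ s 1%N) -> nat -> {set 'I_m + 'I_n},
      (forall j, ordered_copy r s H (W j)) /\
      (forall j k, j != k -> [disjoint copy_vertices r (W j) & copy_vertices r (W k)]).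
Proof.
move=> r2 s2 smono a0 as1; case: r r2 smono => [//|d] d0 smono ssum.
rewrite subn1 /=; set s1 := s 1%N; set S := (\sum_(i < d) s i.+2)%N.
have sS i : (i < d)%N -> (s i.+2 <= S)%N.
  by move=> id; rewrite /S (bigD1 (Ordinal id)) //= leq_addr.
have S0 : (0 < S)%N by have := sS 0%N d0; have := smono 1%N d0; lia.
have s10 : (0 < s1)%N by lia.
have as1' : alpha * s1%:R < 1 by rewrite -ltr_pdivlMr ?ltr0n.
have [n0 linkbox] := common_link_box d0 S0 a0 as1'.
exists n0 => n nn0 m H sb.
have -> : (ssum - s1)%N = S by rewrite /ssum big_nat_recl // big_add1 /= big_mkord addKn.
move=> hm hdeg; apply: (greedy_disjoint_copies (a := s1) (b := S)) => j U1 U2 jm cU1 cU2.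
pose V := trunc_set s1 (~: U1).
have cV : #|V| = s1.
  rewrite card_trunc_set // cardsCs setCK card_ord.
  by move: jm cU1; rewrite leq_divRL // mulSn; lia.
have [A [cA disA boxA]] := linkbox n nn0 m H V U2 sb (fun v _ => hdeg v) cV
  (next_copy_fits d0 S0 s10 jm cU2 hm).
have [W [Wc WV WU cW]] :=
  copy_in_common_link_box cV S0 (fun i id => conj (cA i id) (sS i id)) disA boxA.
by exists W; rewrite WV disjoints_subset trunc_set_sub cV.
Qed.
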